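(* Let $A\in\mathbb{R}^{d\times d}$ with $A\succ0$ and $u,v\in\mathbb{R}^d$. If $2\langle vv^\top,A^{-1}\rangle<1$, then for every $X\succeq0$, \[ \langle X,(A-vv^\top+uu^\top)^{-1}\rangle\le\langle X,A^{-1}\rangle+\frac{\langle X,A^{-1}vv^\top A^{-1}\rangle}{1-2\langle vv^\top,A^{-1}\rangle}-\frac{\langle X,A^{-1}uu^\top A^{-1}\rangle}{1+2\langle uu^\top,A^{-1}\rangle}. \]
   Context: $\langle M,N\rangle=\operatorname{tr}(M^\top N)$ is the Frobenius inner product. *)

From mathcomp Require Import all_boot all_order all_algebra.
Set Implicit Arguments. Unset Strict Implicit. Unset Printing Implicit Defensive.
Import Order.TTheory GRing.Theory Num.Theory.
Local Open Scope ring_scope.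

Definition frob (R : numDomainType) (d : nat) (M N : 'M[R]_d) : R :=
  \tr (M^T *m N).

Definition posdef (R : numDomainType) (d : nat) (A : 'M[R]_d) : Prop :=
  A^T = A /\ forall x : 'cV[R]_d, x != 0 -> 0 < (x^T *m A *m x) 0 0.

Definition psd (R : numDomainType) (d : nat) (X : 'M[R]_d) : Prop :=
  X^T = X /\ forall x : 'cV[R]_d, 0 <= (x^T *m X *m x) 0 0.

From mathcomp Require Import all_boot all_order all_algebra.
From mathcomp Require Import ring lra.
Import Order.TTheory GRing.Theory Num.Theory.
Set Implicit Arguments.
Unset Strict Implicit.
Unset Printing Implicit Defensive.

Local Open Scope ring_scope.

(** Two Sherman-Morrison steps give, with [w = A^-1 v], [z = A^-1 u],
    [a = v' A^-1 v], [b = u' A^-1 u], [m = v' A^-1 u] and [t = m / (1 - a)],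
      (A - v v' + u u')^-1 = A^-1 + w w' / (1 - a) - s s' / (1 + b + t m)
    where [s = z + t w].  Pairing with [X] leaves a scalar inequality in the
    entries [P = <X, z z'>], [Q = <X, z w'>], [W = <X, w w'>] of a PSD Gram
    matrix.  The gap between its two sides is the pairing of [[P, Q], [Q, W]]
    with a 2x2 matrix [[p, q], [q, r]], which is PSD as well: [p, r >= 0] and
      p r - q^2 = (a b - m^2) / ((1 - 2a) (1 - a) (1 + b + t m) (1 + 2b)),
    both by [2 a < 1] and the Cauchy-Schwarz bound [m^2 <= a b] for [A^-1]. *)

Definition bform {R : comRingType} {n : nat} (S : 'M[R]_n) (p q : 'cV[R]_n) : R :=
  (p^T *m S *m q) 0 0.

Section BilinearForm.
Variables (R : comRingType) (n : nat).
Implicit Types (S : 'M[R]_n) (p q : 'cV[R]_n).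

Lemma bformE S p q : bform S p q = (p^T *m (S *m q)) 0 0.
Proof. by rewrite /bform mulmxA. Qed.

Lemma bform_sym S p q : S^T = S -> bform S q p = bform S p q.
Proof.
move=> S_sym; rewrite /bform -[in LHS](trmxK (q^T *m S *m p)) mxE.
by rewrite !trmx_mul !trmxK S_sym mulmxA.
Qed.

Lemma bformDl S p1 p2 q : bform S (p1 + p2) q = bform S p1 q + bform S p2 q.
Proof. by rewrite /bform [(p1 + p2)^T]linearD /= !mulmxDl mxE. Qed.

Lemma bformZl S c p q : bform S (c *: p) q = c * bform S p q.
Proof. by rewrite /bform [(c *: p)^T]linearZ /= -!scalemxAl mxE. Qed.

Lemma bformDr S p q1 q2 : bform S p (q1 + q2) = bform S p q1 + bform S p q2.
Proof. by rewrite /bform mulmxDr mxE. Qed.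

Lemma bformZr S c p q : bform S p (c *: q) = c * bform S p q.
Proof. by rewrite /bform -scalemxAr mxE. Qed.

Lemma bformNr S p q : bform S p (- q) = - bform S p q.
Proof. by rewrite -scaleN1r bformZr mulN1r. Qed.

Lemma bform_expand S p q t : S^T = S ->
  bform S (p + t *: q) (p + t *: q)
  = bform S p p + 2 * t * bform S p q + t ^+ 2 * bform S q q.
Proof.
move=> S_sym; rewrite bformDl !bformDr !bformZl !bformZr (bform_sym p q S_sym).
ring.
Qed.

End BilinearForm.

Section Frobenius.
Variables (R : numDomainType) (n : nat).
Implicit Types (X M N : 'M[R]_n) (p q : 'cV[R]_n).

Lemma frob_outer_l p q N : frob (p *m q^T) N = bform N p q.
Proof.
by rewrite /frob trmx_mul trmxK -mulmxA mxtrace_mulC trace_mx11.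
Qed.

Lemma frob_outer_r X p q : frob X (p *m q^T) = bform X p q.
Proof.
rewrite /frob mulmxA mxtrace_mulC trace_mx11 -(trmxK (q^T *m (X^T *m p))) mxE.
by rewrite !trmx_mul !trmxK.
Qed.

Lemma frobDr X M N : frob X (M + N) = frob X M + frob X N.
Proof. by rewrite /frob mulmxDr mxtraceD. Qed.

Lemma frobBr X M N : frob X (M - N) = frob X M - frob X N.
Proof. by rewrite /frob mulmxBr linearB. Qed.

Lemma frobZr X c M : frob X (c *: M) = c * frob X M.
Proof. by rewrite /frob -scalemxAr mxtraceZ. Qed.

End Frobenius.

Section PositiveDefinite.
Variables (R : numFieldType) (n : nat).
Implicit Types (A : 'M[R]_n).

Lemma posdef_unitmx A : posdef A -> A \in unitmx.
Proof.
case=> _ A_pos; rewrite unitmxE unitfE; apply/negP => /det0P [x x_neq0 xA0].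
by have := A_pos x^T; rewrite trmxK xA0 mul0mx mxE ltxx trmx_eq0; move/(_ x_neq0).
Qed.

Lemma posdef_invmx A : posdef A -> posdef (invmx A).
Proof.
move=> A_pd; have A_unit := posdef_unitmx A_pd; case: A_pd => A_sym A_pos.
split=> [|x x_neq0]; first by rewrite trmx_inv A_sym.
have Aix_neq0 : invmx A *m x != 0.
  by apply: contraNneq x_neq0 => Aix0; rewrite -(mulKVmx A_unit x) Aix0 mulmx0.
by have := A_pos _ Aix_neq0; rewrite trmx_mul trmx_inv A_sym mulmxKV // mulmxA.
Qed.

Lemma posdef_psd A : posdef A -> psd A.
Proof.
case=> A_sym A_pos; split=> // x.
have [->|x_neq0] := eqVneq x 0; first by rewrite mulmx0 mxE.
exact/ltW/A_pos.
Qed.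

End PositiveDefinite.

Lemma quad_ge0_sqr_le (R : realFieldType) (P Q W : R) :
  0 <= W -> (forall t, 0 <= P + 2 * t * Q + t ^+ 2 * W) -> Q ^+ 2 <= P * W.
Proof.
move=> W_ge0 quad_ge0; have [W0|W_neq0] := eqVneq W 0.
  rewrite W0 mulr0; have [->|Q_neq0] := eqVneq Q 0; first by rewrite expr0n.
  have := quad_ge0 (- (P + 1) / (2 * Q)); rewrite W0 mulr0 addr0.
  have -> : 2 * (- (P + 1) / (2 * Q)) * Q = - (P + 1) by field.
  lra.
have W_gt0 : 0 < W by rewrite lt_def W_neq0.
have := quad_ge0 (- Q / W).
have -> : P + 2 * (- Q / W) * Q + (- Q / W) ^+ 2 * W = P - Q ^+ 2 / W by field.
by rewrite subr_ge0 ler_pdivrMr.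
Qed.

Lemma psd_cauchy_schwarz (R : realFieldType) (n : nat) (S : 'M[R]_n) (p q : 'cV[R]_n) :
  psd S -> bform S p q ^+ 2 <= bform S p p * bform S q q.
Proof.
case=> S_sym S_ge0; apply: quad_ge0_sqr_le; first exact: S_ge0.
by move=> t; rewrite -bform_expand //; apply: S_ge0.
Qed.

Section ShermanMorrison.
Variables (F : fieldType) (n : nat).

Lemma mulmx1_invmx (C N : 'M[F]_n) : C *m N = 1%:M -> invmx C = N.
Proof.
move=> CN; have [C_unit _] := mulmx1_unit CN.
by rewrite -[invmx C]mulmx1 -CN mulmxA mulVmx // mul1mx.
Qed.

Variables (C : 'M[F]_n) (p q : 'cV[F]_n).
Hypotheses (C_unit : C \in unitmx) (denom_neq0 : 1 + bform (invmx C) q p != 0).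
Local Notation Ci := (invmx C).
Local Notation k := (1 + bform (invmx C) q p)^-1.

Lemma mulmx_add_outer_inv :
  (C + p *m q^T) *m (Ci - k *: (Ci *m p *m (q^T *m Ci))) = 1%:M.
Proof.
set P := p *m (q^T *m Ci).
have CP : C *m (Ci *m p *m (q^T *m Ci)) = P by rewrite -mulmxA mulKVmx.
have outerCi : p *m q^T *m Ci = P by rewrite /P mulmxA.
have outerP : p *m q^T *m (Ci *m p *m (q^T *m Ci)) = bform Ci q p *: P.
  have -> : p *m q^T *m (Ci *m p *m (q^T *m Ci)) = p *m (q^T *m Ci *m p) *m (q^T *m Ci).
    by rewrite !mulmxA.
  by rewrite [q^T *m Ci *m p]mx11_scalar mul_mx_scalar -scalemxAl.
have kE : 1 - k * bform Ci q p = k by field.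
rewrite mulmxDl !mulmxBr mulmxV // outerCi -!scalemxAr CP outerP scalerA.
by rewrite -{2}(scale1r P) -scalerBl kE subrK.
Qed.

Lemma unitmx_add_outer : C + p *m q^T \in unitmx.
Proof. exact: (mulmx1_unit mulmx_add_outer_inv).1. Qed.

Lemma invmx_add_outer :
  invmx (C + p *m q^T) = Ci - k *: (Ci *m p *m (q^T *m Ci)).
Proof. exact: mulmx1_invmx mulmx_add_outer_inv. Qed.

End ShermanMorrison.

Section RankTwoUpdate.
Variables (F : fieldType) (n : nat) (A : 'M[F]_n) (u v : 'cV[F]_n).
Hypotheses (A_sym : A^T = A) (A_unit : A \in unitmx).
Local Notation Ai := (invmx A).
Local Notation w := (Ai *m v).
Local Notation a := (bform Ai v v).
Local Notation b := (bform Ai u u).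
Local Notation m := (bform Ai v u).
Local Notation t := ((1 - a)^-1 * m).
Hypotheses (denom_v_neq0 : 1 - a != 0) (denom_u_neq0 : 1 + (b + t * m) != 0).

Let Ai_sym : Ai^T = Ai. Proof. by rewrite trmx_inv A_sym. Qed.

Lemma unitmx_sub_outer : A - v *m v^T \in unitmx.
Proof. by rewrite -mulNmx unitmx_add_outer // bformNr. Qed.

Lemma invmx_sub_outer : invmx (A - v *m v^T) = Ai + (1 - a)^-1 *: (w *m w^T).
Proof.
have vTAi : v^T *m Ai = w^T by rewrite trmx_mul Ai_sym.
rewrite -mulNmx invmx_add_outer ?bformNr //.
by rewrite vTAi mulmxN mulNmx scalerN opprK.
Qed.

Lemma invmx_sub_outer_mul : invmx (A - v *m v^T) *m u = Ai *m u + t *: w.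
Proof.
have wTu : w^T *m u = m%:M by rewrite trmx_mul Ai_sym; exact: mx11_scalar.
by rewrite invmx_sub_outer mulmxDl -scalemxAl -mulmxA wTu mul_mx_scalar scalerA.
Qed.

Lemma bform_invmx_sub_outer : bform (invmx (A - v *m v^T)) u u = b + t * m.
Proof.
rewrite bformE invmx_sub_outer_mul mulmxDr -scalemxAr mxE [X in _ + X]mxE -bformE.
by rewrite mulmxA -/(bform Ai u v) (bform_sym v u Ai_sym).
Qed.

Lemma invmx_sub_add_outer :
  let s := Ai *m u + t *: w in
  invmx (A - v *m v^T + u *m u^T)
  = Ai + (1 - a)^-1 *: (w *m w^T) - (1 + (b + t * m))^-1 *: (s *m s^T).
Proof.
set Bi := invmx (A - v *m v^T).
have uTBi : u^T *m Bi = (Bi *m u)^T.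
  by rewrite trmx_mul /Bi trmx_inv linearB /= trmx_mul trmxK A_sym.
rewrite invmx_add_outer ?unitmx_sub_outer ?bform_invmx_sub_outer //.
by rewrite uTBi invmx_sub_outer_mul invmx_sub_outer.
Qed.

End RankTwoUpdate.

Section ScalarBound.
Variable R : realFieldType.

Lemma psd2_pairing_ge0 (p q r P Q W : R) :
  0 <= p -> 0 <= r -> q ^+ 2 <= p * r ->
  0 <= P -> 0 <= W -> Q ^+ 2 <= P * W ->
  0 <= p * P + 2 * (q * Q) + r * W.
Proof.
move=> p_ge0 r_ge0 pqr P_ge0 W_ge0 PQW.
have x_ge0 : 0 <= p * P by exact: mulr_ge0.
have y_ge0 : 0 <= r * W by exact: mulr_ge0.
have sxy : (q * Q) ^+ 2 <= (p * P) * (r * W).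
  by rewrite exprMn [X in _ <= X]mulrACA; apply: ler_pM; rewrite ?sqr_ge0.
move: (p * P) (r * W) (q * Q) x_ge0 y_ge0 sxy => x y s x_ge0 y_ge0 sxy.
have : 0 <= (x + y) * (x + 2 * s + y).
  have -> : (x + y) * (x + 2 * s + y)
            = (x + s) ^+ 2 + (y + s) ^+ 2 + 2 * (x * y - s ^+ 2) by ring.
  by rewrite !addr_ge0 ?sqr_ge0 // mulr_ge0 // subr_ge0.
have [xy0|xy0] := eqVneq (x + y) 0; last by rewrite pmulr_rge0 //; lra.
have [x0 y0] : x = 0 /\ y = 0 by lra.
nra.
Qed.

Lemma rank_two_update_bound (a b m t P Q W : R) :
  0 <= a -> 2 * a < 1 -> 0 <= b -> m ^+ 2 <= a * b -> t * (1 - a) = m ->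
  0 <= P -> 0 <= W -> Q ^+ 2 <= P * W ->
  (1 - a)^-1 * W - (1 + (b + t * m))^-1 * (P + 2 * t * Q + t ^+ 2 * W)
    <= W / (1 - 2 * a) - P / (1 + 2 * b).
Proof.
move=> a_ge0 a_lt b_ge0 ab tm P_ge0 W_ge0 PQW; subst m.
have a_lt1 : 0 < 1 - a by lra.
have a_lt_half : 0 < 1 - 2 * a by lra.
have E_gt0 : 0 < 1 + 2 * b by lra.
set D := 1 + (b + t * (t * (1 - a))).
have D_gt0 : 0 < D by rewrite /D; nra.
pose p := D^-1 - (1 + 2 * b)^-1.
pose q := t / D.
pose r := (1 - 2 * a)^-1 - (1 - a)^-1 + t ^+ 2 / D.
rewrite -subr_ge0.
have -> : W / (1 - 2 * a) - P / (1 + 2 * b)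
          - ((1 - a)^-1 * W - D^-1 * (P + 2 * t * Q + t ^+ 2 * W))
          = p * P + 2 * (q * Q) + r * W.
  by rewrite /p /q /r; field; rewrite ?lt0r_neq0.
apply: psd2_pairing_ge0 => //.
- rewrite subr_ge0 lef_pV2 ?posrE // lerD2l.
  suff : t * (t * (1 - a)) <= b by lra.
  rewrite -(ler_pM2l a_lt1) [X in X <= _](_ : _ = (t * (1 - a)) ^+ 2); last by ring.
  apply: (le_trans ab); rewrite -subr_ge0.
  rewrite [X in 0 <= X](_ : _ = b * (1 - 2 * a)); last by ring.
  by rewrite mulr_ge0 // ltW.
- apply: addr_ge0; last by rewrite divr_ge0 ?sqr_ge0 ?ltW.
  by rewrite subr_ge0 lef_pV2 ?posrE //; lra.
- rewrite -subr_ge0.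
  have -> : p * r - q ^+ 2
            = (a * b - (t * (1 - a)) ^+ 2) / ((1 - 2 * a) * (1 - a) * D * (1 + 2 * b)).
    by rewrite /p /q /r /D; field; rewrite ?lt0r_neq0.
  apply: divr_ge0; first by rewrite subr_ge0.
  by rewrite !mulr_ge0 // ltW.
Qed.

End ScalarBound.

Theorem lemma2p13 (R : realFieldType) (d : nat) (A : 'M[R]_d) (u v : 'cV[R]_d) :
  posdef A ->
  2 * frob (v *m v^T) (invmx A) < 1 ->
  forall X : 'M[R]_d, psd X ->
    frob X (invmx (A - v *m v^T + u *m u^T))
    <= frob X (invmx A)
       + frob X (invmx A *m v *m v^T *m invmx A) / (1 - 2 * frob (v *m v^T) (invmx A))
       - frob X (invmx A *m u *m u^T *m invmx A) / (1 + 2 * frob (u *m u^T) (invmx A)).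
Proof.
move=> A_pd a_lt X X_psd; have [X_sym X_ge0] := X_psd.
have Ai_psd := posdef_psd (posdef_invmx A_pd).
have [Ai_sym Ai_ge0] := Ai_psd.
have outer_Ai p : invmx A *m p *m p^T *m invmx A = (invmx A *m p) *m (invmx A *m p)^T.
  by rewrite trmx_mul Ai_sym mulmxA.
rewrite !frob_outer_l !outer_Ai in a_lt *.
have a_ge0 : 0 <= bform (invmx A) v v := Ai_ge0 v.
have b_ge0 : 0 <= bform (invmx A) u u := Ai_ge0 u.
have m_sq := psd_cauchy_schwarz v u Ai_psd.
set a := bform (invmx A) v v in a_lt a_ge0 m_sq *.
set b := bform (invmx A) u u in b_ge0 m_sq *.
set m := bform (invmx A) v u in m_sq *.
have a_lt1 : 0 < 1 - a by lra.
have tm : (1 - a)^-1 * m * (1 - a) = m by rewrite mulrAC mulVf ?mul1r ?lt0r_neq0.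
have denom_u : 0 < 1 + (b + (1 - a)^-1 * m * m).
  suff : 0 <= (1 - a)^-1 * (m * m) by rewrite mulrA; lra.
  by apply: mulr_ge0; [rewrite invr_ge0; lra | nra].
have := invmx_sub_add_outer A_pd.1 (posdef_unitmx A_pd)
          (lt0r_neq0 a_lt1) (lt0r_neq0 denom_u).
move=> /= ->; rewrite -/a -/b -/m.
rewrite frobBr frobDr !frobZr !frob_outer_r bform_expand //.
rewrite -addrA -[X in _ <= X]addrA lerD2l.
apply: rank_two_update_bound => //;
  [exact: X_ge0 | exact: X_ge0 | exact: psd_cauchy_schwarz].
Qed.
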